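(* Let $\Sigma$ be a finite alphabet, $L \subseteq \Sigma^*$ a regular language, and $\mathcal{B}$ a DFA recognizing $L^\mathsf{R}$ that is not well-behaved. Then $V_L(n) \in \Omega(n)$ and $F_L(n) \in \mathcal{O}(n)\setminus o(n)$.
   Context: $L^\mathsf{R}=\{x^\mathsf{R}:x\in L\}$ (word reversal). A DFA $(Q,\Sigma,q_0,\delta,F)$ is well-behaved if every strongly connected component $C$ (inclusion-maximal set of mutually reachable states) reachable from $q_0$ satisfies: for all $q\in C$ and $u,v\in\Sigma^*$ with $|u|=|v|$ and $\delta(q,u),\delta(q,v)\in C$, $\delta(q,u)\in F\iff\delta(q,v)\in F$. A streaming algorithm is a deterministic (possibly infinite-state) automaton with an injective encoding $\mathrm{enc}$ of states into bit strings. Fixed-size: fix $a\in\Sigma$, $\mathrm{last}_n(a_1\cdots a_m)=a_{m-n+1}\cdots a_m$ if $n\le m$, else $a^{n-m}a_1\cdots a_m$; a fixed-size algorithm is $(\mathcal{A}_n)$ with $\mathcal{A}_n$ accepting $\{w:\mathrm{last}_n(w)\in L\}$, space at $n$ = maximal encoding length of a state of $\mathcal{A}_n$; $F_L(n)$ is the minimum over all such algorithms. Variable-size: over $\overline\Sigma=\Sigma\cup\{\downarrow\}$, $\mathrm{wnd}(\varepsilon)=\varepsilon$, $\mathrm{wnd}(ub)=\mathrm{wnd}(u)b$ ($b\in\Sigma$), $\mathrm{wnd}(u\!\downarrow)=\varepsilon$ if $\mathrm{wnd}(u)=\varepsilon$, $\mathrm{wnd}(u\!\downarrow)=v$ if $\mathrm{wnd}(u)=bv$;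 an algorithm accepts $\{w:\mathrm{wnd}(w)\in L\}$ and has space complexity $v_\mathcal{A}(n)=\max\{|\mathrm{enc}(\mathcal{A}(u'))|: u' \text{ prefix of } u,\ |\mathrm{wnd}(v)|\le n\text{ for all prefixes }v\text{ of }u\}$; $V_L(n)$ is the minimum of $v_\mathcal{A}(n)$ over all such algorithms. *)

From mathcomp Require Import all_boot.
Set Implicit Arguments. Unset Strict Implicit. Unset Printing Implicit Defensive.

Record dfa (S : Type) := Dfa {
  dfa_state : finType;
  dfa_init : dfa_state;
  dfa_delta : dfa_state -> S -> dfa_state;
  dfa_final : pred dfa_state }.

Definition dfa_run S (A : dfa S) (q : dfa_state A) (w : seq S) : dfa_state A := foldl (@dfa_delta _ A) q w.
Definition dfa_accepts S (A : dfa S) (w : seq S) : bool :=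
  @dfa_final _ A (@dfa_run _ A (@dfa_init _ A) w).

Definition regular (S : Type) (L : pred (seq S)) : Prop :=
  exists A : dfa S, forall w, dfa_accepts A w = L w.

Definition reach S (A : dfa S) (q q' : dfa_state A) : Prop := exists w, @dfa_run _ A q w = q'.

Definition mutually_reachable S (A : dfa S) (C : {set dfa_state A}) : Prop :=
  forall p q, p \in C -> q \in C -> reach p q.
Definition is_scc S (A : dfa S) (C : {set dfa_state A}) : Prop :=
  mutually_reachable C /\
  forall D : {set dfa_state A}, C \subset D -> mutually_reachable D -> D = C.

Definition well_behaved S (A : dfa S) : Prop :=
  forall C : {set dfa_state A}, is_scc C -> (exists q, q \in C /\ reach (@dfa_init _ A) q) ->
  forall (q : dfa_state A) (u v : seq S), q \in C -> size u = size v ->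
    @dfa_run _ A q u \in C -> @dfa_run _ A q v \in C ->
    (@dfa_final _ A (@dfa_run _ A q u) <-> @dfa_final _ A (@dfa_run _ A q v)).

Record stream_alg (S : Type) := StreamAlg {
  sa_state : Type;
  sa_init : sa_state;
  sa_step : sa_state -> S -> sa_state;
  sa_acc : sa_state -> bool;
  sa_enc : sa_state -> seq bool;
  sa_enc_inj : injective sa_enc }.

Definition sa_run S (A : stream_alg S) (w : seq S) : sa_state A :=
  foldl (@sa_step _ A) (@sa_init _ A) w.
Definition sa_accepts S (A : stream_alg S) (w : seq S) : bool := @sa_acc _ A (sa_run A w).

Definition last_n (S : Type) (a : S) (n : nat) (w : seq S) : seq S :=
  if n <= size w then drop (size w - n) w else nseq (n - size w) a ++ w.

(* F_L(n) <= k : some algorithm A_n for {w | last_n(w) in L} has all state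
   encodings of length at most k (space of A_n = max encoding length of a state) *)
Definition FL_le (S : Type) (a : S) (L : pred (seq S)) (n k : nat) : Prop :=
  exists A : stream_alg S,
    (forall w, sa_accepts A w = L (last_n a n w)) /\
    (forall q : sa_state A, size (@sa_enc _ A q) <= k).

(* None plays the role of the pop symbol "down-arrow" *)
Definition wnd_step (S : Type) (x : seq S) (c : option S) : seq S :=
  match c with Some b => rcons x b | None => behead x end.
Definition wnd (S : Type) (u : seq (option S)) : seq S := foldl (@wnd_step S) [::] u.

Definition vspace_le (S : Type) (A : stream_alg (option S)) (n k : nat) : Prop :=
  forall u : seq (option S),
    (forall i, i <= size u -> size (wnd (take i u)) <= n) ->
    forall i, i <= size u -> size (@sa_enc _ A (sa_run A (take i u))) <= k.

Definition VL_le (S : Type) (L : pred (seq S)) (n k : nat) : Prop :=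
  exists A : stream_alg (option S),
    (forall w, sa_accepts A w = L (wnd w)) /\ vspace_le A n k.

(* ---------- linear asymptotics for f given by  f_le n k := f(n) <= k ---------- *)
Definition Omega_lin (f_le : nat -> nat -> Prop) : Prop :=
  exists a b N, 0 < a /\ 0 < b /\
    forall n, N <= n -> forall m, f_le n m -> a * n <= b * m.
Definition bigO_lin (f_le : nat -> nat -> Prop) : Prop :=
  exists C N, forall n, N <= n -> f_le n (C * n).
Definition littleo_lin (f_le : nat -> nat -> Prop) : Prop :=
  forall a b, 0 < a -> 0 < b -> exists N, forall n, N <= n ->
    exists m, f_le n m /\ b * m <= a * n.

From mathcomp Require Import all_boot zify.
From Stdlib Require Import Classical.

Set Implicit Arguments.
Unset Strict Implicit.
Unset Printing Implicit Defensive.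

(** Since B is not well-behaved, there are a reachable state q and words u, v
    of equal length such that q.u and q.v lie in the component of q but exactly
    one of them is accepting.  Returning to q gives two loops at q of the same
    length [period], one beginning with u and one with v.  Feed a sliding-window
    algorithm for L the reversal of the concatenation of these loops along a
    bit string t: a suitable continuation shifts the window so that its
    reversal is a run of B through q stopping right after the u or v of the
    i-th loop, so the verdict of the algorithm reveals bit i.  Windows of size
    about K * period therefore force 2^(K+1) distinct states, i.e. about K
    bits.  For fixed-size windows the matching upper bound stores the window
    verbatim. *)

Lemma nseq_cat_cons_inj (T : eqType) (x y : T) i j (r1 r2 : seq T) : x != y ->
  nseq i x ++ y :: r1 = nseq j x ++ y :: r2 -> i = j /\ r1 = r2.
Proof.
move=> neq_xy; elim: i j => [|i IHi] [|j] /=; try by case.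
- by case=> eq_yx; rewrite eq_yx eqxx in neq_xy.
- by case=> eq_xy; rewrite eq_xy eqxx in neq_xy.
- by case=> /IHi [-> ->].
Qed.

Lemma bits_injection_size_bound k M (g : k.-tuple bool -> seq bool) :
  injective g -> (forall t, size (g t) <= M) -> k <= M.+1.
Proof.
move=> g_inj g_size.
pose pad (b : seq bool) := nseq (M - size b) false ++ true :: b.
have pad_size t : size (pad (g t)) == M.+1.
  by rewrite size_cat size_nseq /= addnS subnK ?g_size.
pose h t : M.+1.-tuple bool := Tuple (pad_size t).
have h_inj : injective h.
  move=> t t' /(congr1 val) /nseq_cat_cons_inj [] // _; exact: g_inj.
by have := leq_card h h_inj; rewrite !card_tuple card_bool leq_exp2l.
Qed.

Lemma sa_run_cat T (A : stream_alg T) w z :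
  sa_run A (w ++ z) = foldl (@sa_step _ A) (sa_run A w) z.
Proof. exact: foldl_cat. Qed.

Lemma fooling_set_size_bound T (A : stream_alg T) k M
    (w : k.-tuple bool -> seq T) (z : 'I_k -> seq T) (f : bool -> bool) :
  injective f ->
  (forall t i, sa_accepts A (w t ++ z i) = f (tnth t i)) ->
  (forall t, size (sa_enc (sa_run A (w t))) <= M) ->
  k <= M.+1.
Proof.
move=> f_inj reveal enc_size.
apply: (@bits_injection_size_bound _ _ (fun t => sa_enc (sa_run A (w t)))) => //.
move=> t t' /sa_enc_inj same_state; apply: eq_from_tnth => i; apply: f_inj.
by rewrite -!reveal /sa_accepts !sa_run_cat same_state.
Qed.

Lemma rev_last_n T (a : T) n w : n <= size w -> rev (last_n a n w) = take n (rev w).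
Proof. by move=> le_nw; rewrite /last_n le_nw rev_drop subKn. Qed.

Lemma foldl_wnd_step_Some T (x w : seq T) :
  foldl (@wnd_step T) x (map Some w) = x ++ w.
Proof. by elim: w x => [|c w IHw] x /=; rewrite ?cats0 ?IHw ?cat_rcons. Qed.

Lemma foldl_wnd_step_None T (x : seq T) d :
  foldl (@wnd_step T) x (nseq d None) = drop d x.
Proof. by elim: d x => [|d IHd] [|c x] /=; rewrite ?drop0 ?IHd. Qed.

Section FixedWindow.

Variables (S : finType) (a : S) (L : pred (seq S)) (n : nat).

Definition shift_window (t : n.-tuple S) (c : S) : n.-tuple S :=
  behead_tuple (rcons_tuple t c).

Definition unary_code (c : S) : seq bool := nseq (enum_rank c) true ++ [:: false].

Definition window_code (t : n.-tuple S) : seq bool := flatten (map unary_code t).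

Lemma flatten_unary_code_inj : injective (fun w => flatten (map unary_code w)).
Proof.
elim=> [|c w IHw] [|c' w'] //=; rewrite /unary_code -?catA.
- by case: (nat_of_ord (enum_rank c')).
- by case: (nat_of_ord (enum_rank c)).
- by move=> /nseq_cat_cons_inj [] // /ord_inj/enum_rank_inj -> /IHw ->.
Qed.

Lemma window_code_inj : injective window_code.
Proof. by move=> t t' /flatten_unary_code_inj /val_inj. Qed.

Lemma size_window_code t : size (window_code t) <= #|S| * n.
Proof.
rewrite mulnC -[n](size_tuple t) /window_code.
elim: (tval t) => //= c w IHw; rewrite size_cat mulSn leq_add //.
by rewrite size_cat size_nseq addn1 ltn_ord.
Qed.

Definition window_alg : stream_alg S :=
  StreamAlg (nseq_tuple n a) shift_window (fun t => L t) window_code_inj.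

Lemma foldl_shift_window (t : n.-tuple S) w :
  val (foldl shift_window t w) = drop (size w) (t ++ w).
Proof.
elim: w t => [|c w IHw] t /=; first by rewrite drop0 cats0.
rewrite IHw /= -addn1 -drop_drop; congr (drop _ _).
by case: t => [[|d r] ?] /=; rewrite ?drop0 ?cat_rcons.
Qed.

Lemma window_alg_accepts w : sa_accepts window_alg w = L (last_n a n w).
Proof.
rewrite /sa_accepts /sa_run /= foldl_shift_window /last_n drop_cat size_nseq.
by case: leqP => [le_nw|lt_wn]; rewrite ?drop_nseq // ltnNge le_nw.
Qed.

End FixedWindow.

Lemma FL_bigO (S : finType) (a : S) (L : pred (seq S)) : bigO_lin (FL_le a L).
Proof.
exists #|S|, 0 => n _; exists (window_alg a L n).
by split; [exact: window_alg_accepts | exact: size_window_code].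
Qed.

Lemma dfa_run_cat S (A : dfa S) (p : dfa_state A) w1 w2 :
  dfa_run p (w1 ++ w2) = dfa_run (dfa_run p w1) w2.
Proof. exact: foldl_cat. Qed.

Lemma reach_trans S (A : dfa S) (p q r : dfa_state A) :
  reach p q -> reach q r -> reach p r.
Proof. by move=> [w1 <-] [w2 <-]; exists (w1 ++ w2); rewrite dfa_run_cat. Qed.

Lemma not_well_behavedP S (B : dfa S) : ~ well_behaved B ->
  exists q u v, [/\ reach (dfa_init B) q, reach (dfa_run q u) q,
    reach (dfa_run q v) q, size u = size v &
    dfa_final (dfa_run q u) != dfa_final (dfa_run q v)].
Proof.
move=> not_wb; apply: NNPP => no_witness; apply: not_wb.
move=> C [C_connected _] [q0 [C_q0 reach_q0]] q u v C_q size_uv C_qu C_qv.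
apply: NNPP => final_uv; apply: no_witness; exists q, u, v; split.
- exact: reach_trans reach_q0 (C_connected _ _ C_q0 C_q).
- exact: C_connected.
- exact: C_connected.
- exact: size_uv.
- by apply/negP => /eqP eq_final; apply: final_uv; rewrite eq_final.
Qed.

Section FoolingLoops.

Variables (S : finType) (B : dfa S) (L : pred (seq S)).
Hypothesis B_rev : forall w, dfa_accepts B w = L (rev w).

Variables (q : dfa_state B) (s u v ru rv : seq S).
Hypotheses (run_s : dfa_run (dfa_init B) s = q)
  (run_ru : dfa_run (dfa_run q u) ru = q) (run_rv : dfa_run (dfa_run q v) rv = q)
  (size_uv : size u = size v)
  (final_uv : dfa_final (dfa_run q u) != dfa_final (dfa_run q v)).

Definition loop_block (b : bool) : seq S :=
  if b then u ++ ru ++ v ++ rv else v ++ rv ++ u ++ ru.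

Definition loop_blocks (t : seq bool) : seq S := flatten (map loop_block t).

Definition period : nat := size (loop_block true).

Definition loop_verdict (b : bool) : bool := dfa_final (dfa_run q (if b then u else v)).

Lemma loop_verdict_inj : injective loop_verdict.
Proof.
rewrite /loop_verdict; case=> [] [] // eq_final; move: final_uv;
by rewrite eq_final eqxx.
Qed.

Lemma period_gt0 : 0 < period.
Proof.
rewrite /period /= size_cat lt0n addn_eq0 size_eq0; apply/nandP; left.
apply: contraNN final_uv => /eqP u_nil.
by move: size_uv; rewrite u_nil => /esym/size0nil ->.
Qed.

Lemma size_u_le_period : size u <= period.
Proof. by rewrite /period /= size_cat leq_addr. Qed.

Lemma size_loop_block b : size (loop_block b) = period.
Proof. by rewrite /period; case: b; rewrite //= !size_cat size_uv; lia. Qed.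

Lemma take_loop_block b : take (size u) (loop_block b) = if b then u else v.
Proof. by case: b; rewrite /= ?size_uv take_size_cat. Qed.

Lemma run_loop_block b : dfa_run q (loop_block b) = q.
Proof. by case: b; rewrite /= !dfa_run_cat ?run_ru ?run_rv. Qed.

Lemma loop_blocks_cons b t : loop_blocks (b :: t) = loop_block b ++ loop_blocks t.
Proof. by []. Qed.

Lemma size_loop_blocks t : size (loop_blocks t) = size t * period.
Proof.
by elim: t => // b t IHt; rewrite loop_blocks_cons size_cat IHt size_loop_block.
Qed.

Lemma run_loop_blocks t : dfa_run q (loop_blocks t) = q.
Proof.
by elim: t => // b t IHt; rewrite loop_blocks_cons dfa_run_cat run_loop_block.
Qed.

Lemma take_loop_blocks t i : i < size t ->
  take (i * period + size u) (loop_blocks t) =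
  loop_blocks (take i t) ++ (if nth false t i then u else v).
Proof.
move=> lt_it; rewrite -{1}(cat_take_drop i t) (drop_nth false lt_it).
rewrite /loop_blocks map_cat flatten_cat /= -/(loop_blocks _) -take_loop_block.
rewrite take_cat size_loop_blocks size_take lt_it ltnNge leq_addr /= addKn.
by rewrite takel_cat // size_loop_block size_u_le_period.
Qed.

Lemma accepts_take_loop_blocks p t i :
  dfa_run (dfa_init B) p = q -> i < size t ->
  dfa_accepts B (p ++ take (i * period + size u) (loop_blocks t)) =
  loop_verdict (nth false t i).
Proof.
move=> run_p lt_it.
by rewrite /dfa_accepts take_loop_blocks // !dfa_run_cat run_p run_loop_blocks.
Qed.

Lemma FL_le_lower_bound a K M :
  FL_le a L (size s + K * period + size u) M -> K <= M.
Proof.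
move=> [A [A_ok A_space]]; rewrite -ltnS.
pose w (t : K.+1.-tuple bool) := rev (loop_blocks t).
pose z (i : 'I_K.+1) := rev (s ++ loop_blocks (nseq (K - i) true)).
apply: (fooling_set_size_bound (A := A) (w := w) (z := z) loop_verdict_inj)
  => [t i|t]; last exact: A_space.
have le_iK : i <= K by rewrite -ltnS.
have prefix_size :
    size (s ++ loop_blocks (nseq (K - i) true)) + (i * period + size u) =
    size s + K * period + size u.
  have := mulnDl (K - i) i period; rewrite subnK // size_cat size_loop_blocks size_nseq.
  lia.
rewrite A_ok -[last_n _ _ _]revK -B_rev rev_last_n; last first.
  rewrite !size_cat !size_rev size_cat !size_loop_blocks size_nseq size_tuple.
  by have := size_u_le_period; rewrite mulSn; lia.
rewrite rev_cat !revK -prefix_size take_cat ltnNge leq_addr /= addKn.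
rewrite (tnth_nth false) accepts_take_loop_blocks ?size_tuple //.
by rewrite dfa_run_cat run_s run_loop_blocks.
Qed.

Lemma VL_le_lower_bound n K M : K.+1 * period <= n -> VL_le L n M -> K <= M.
Proof.
move=> le_n [A [A_ok A_space]]; rewrite -ltnS.
pose w (t : K.+1.-tuple bool) := map Some (rev (loop_blocks t)).
(* The pops leave exactly the first [i * period + size u] symbols of [loop_blocks t]. *)
pose z (i : 'I_K.+1) :=
  nseq (K.+1 * period - (i * period + size u)) None ++ map Some (rev s).
apply: (fooling_set_size_bound (A := A) (w := w) (z := z) loop_verdict_inj)
  => [t i|t].
- have le_prefix : i * period + size u <= K.+1 * period.
    have := leq_mul (ltn_ord i : i <= K) (leqnn period).
    by have := size_u_le_period; rewrite mulSn; lia.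
  rewrite A_ok /wnd !foldl_cat foldl_wnd_step_Some foldl_wnd_step_None.
  rewrite foldl_wnd_step_Some /= -[_ ++ rev s]revK -B_rev rev_cat revK rev_drop.
  rewrite revK size_rev size_loop_blocks size_tuple subKn // (tnth_nth false).
  by rewrite accepts_take_loop_blocks ?size_tuple.
- have := A_space (w t) _ (size (w t)) (leqnn _); rewrite take_size; apply.
  move=> j _; rewrite -map_take /wnd foldl_wnd_step_Some /= size_take_min.
  by rewrite size_rev size_loop_blocks size_tuple (leq_trans (geq_minr _ _)).
Qed.

Lemma VL_Omega_lin : Omega_lin (VL_le L).
Proof.
exists 1, (2 * period), (3 * period).
split=> //; split; first by rewrite muln_gt0 period_gt0.
move=> n le_3n M VL_nM; rewrite mul1n mulnAC.
have ge3_k : 3 <= n %/ period by rewrite leq_divRL ?period_gt0.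
have le_kM : (n %/ period).-1 <= M.
  by apply: (VL_le_lower_bound _ VL_nM); rewrite prednK ?leq_divM //; lia.
apply: ltnW (leq_trans (ltn_ceil n period_gt0) _).
by rewrite leq_mul2r; apply/orP; right; lia.
Qed.

Lemma FL_not_littleo a : ~ littleo_lin (FL_le a L).
Proof.
move=> /(_ 1 (2 * period) isT) []; first by rewrite muln_gt0 period_gt0.
move=> N FL_small.
(* [K >= N] pushes the window size past [N], while [K >= size s + 2]
   contradicts [2 * period * K <= size s + K * period + size u]. *)
pose K := N + size s + 2.
have le_N : N <= size s + K * period + size u.
  by have := leq_pmulr K period_gt0; lia.
have [M [/FL_le_lower_bound le_KM]] := FL_small _ le_N.
have := size_u_le_period; have := period_gt0; rewrite /K; nia.
Qed.

End FoolingLoops.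

Theorem theorem5p3 (S : finType) (L : pred (seq S)) (B : dfa S) :
  regular L ->
  (forall w, dfa_accepts B w = L (rev w)) ->
  ~ well_behaved B ->
  Omega_lin (VL_le L) /\
  (forall a : S, bigO_lin (FL_le a L) /\ ~ littleo_lin (FL_le a L)).
Proof.
move=> _ B_rev /not_well_behavedP [q [u [v [[s run_s] [ru run_ru] [rv run_rv]]]]].
move=> size_uv final_uv.
split; first exact: (VL_Omega_lin B_rev run_s run_ru run_rv size_uv final_uv).
move=> a; split; first exact: FL_bigO.
exact: (FL_not_littleo B_rev run_s run_ru run_rv size_uv final_uv).
Qed.
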